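(* Let $n\ge1$ and $m\ge1$ be integers and $q\in\mathbb{C}$. With $K_n(x,q)=(1+x)^{2n}+qx^n$ and $f_m(x)=(x^{2m+1}-1)/(x-1)$, \[ \Delta_x\big(K_n(x,q)f_m(x)\big)=C_m^{(n)}\,q^{2n-1}(q+2^{2n})\prod_{k=1}^{m}\big(q+(2\cos k\theta_m+2)^n\big)^4 = C_m^{(n)}\,q^{2n-1}(q+2^{2n})\,H_m^{(n)}(q)^4, \] where $C_m^{(n)}=(-1)^m(2m+1)^{2m-1}n^{2n}$.
   Context: For a polynomial $P(x)$ of degree $d$ with leading coefficient $a_d$ and roots $x_1,\dots,x_d$ (with multiplicity), its discriminant is $\Delta_x P=a_d^{2d-2}\prod_{1\le i<j\le d}(x_i-x_j)^2$. For integers $m\ge0$, $n\ge1$, let $\theta_m=2\pi/(2m+1)$ and $H_m^{(n)}(q)=\prod_{k=1}^{m}\big(q+(2\cos k\theta_m+2)^n\big)$ (so $H_0^{(n)}=1$). *)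

From HB Require Import structures.
From mathcomp Require Import all_boot all_order all_algebra.
Set Implicit Arguments. Unset Strict Implicit. Unset Printing Implicit Defensive.
Import Order.TTheory GRing.Theory Num.Theory.
Local Open Scope ring_scope.

Section Defs.
Variable C : numClosedFieldType.

(* A root list (with multiplicity) of p : p = lead_coef p * prod (X - r). *)
Definition roots_of (p : {poly C}) : seq C :=
  sval (closed_field_poly_normal p).

Definition disc (p : {poly C}) : C :=
  let rs := roots_of p in
  lead_coef p ^+ (2 * (size p).-1 - 2) *
  \prod_(i < size rs) \prod_(j < size rs | (i < j)%N) (rs`_i - rs`_j) ^+ 2.

Definition Kpoly (n : nat) (q : C) : {poly C} :=
  (1 + 'X) ^+ (2 * n) + q *: 'X^n.

Definition fpoly (m : nat) : {poly C} :=
  ('X^(2 * m + 1) - 1) %/ ('X - 1).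

(* zeta_m = exp(i theta_m) = exp(2 pi i/(2m+1)); N.-root (-1) = exp(i pi/N) *)
Definition zeta (m : nat) : C := ((2 * m + 1).-root (-1)) ^+ 2.

Definition twocos (m k : nat) : C := zeta m ^+ k + zeta m ^- k.

Definition Hpoly (m n : nat) (q : C) : C :=
  \prod_(1 <= k < m.+1) (q + (twocos m k + 2) ^+ n).

Definition Cconst (m n : nat) : C :=
  (-1) ^+ m * (2 * m + 1)%:R ^+ (2 * m - 1) * n%:R ^+ (2 * n).

End Defs.

From HB Require Import structures.
From mathcomp Require Import all_boot all_order all_algebra.
From mathcomp Require Import cyclic separable cyclotomic.
From mathcomp Require Import ring zify.
Import Order.TTheory GRing.Theory Num.Theory.
Local Open Scope ring_scope.
Set Implicit Arguments. Unset Strict Implicit. Unset Printing Implicit Defensive.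

(* Both factors are monic with explicit roots, so
   disc (f K) = disc f * disc K * Res(f, K)^2, each discriminant being, up to
   sign, the product of the derivative over the roots.  For f, with N = 2m + 1,
   the identity (x - 1) f'(x) = N x^(N-1) at the roots zeta^k (1 <= k <= 2m)
   gives N^(2m-1).  For K, the identity K'(r) r (1 + r) = n q r^n (1 - r) at
   its roots, together with K(0) = 1, K(-1) = (-1)^n q and K(1) = 4^n + q,
   gives n^(2n) q^(2n-1) (q + 4^n).  Finally
   K(zeta^k) = zeta^(kn) (q + (zeta^k + zeta^-k + 2)^n), and the factors for k
   and N - k agree, so Res(f, K) = H^2.
   The only analytic input is that zeta = (N.-root (-1))^2 is a primitive N-th
   root of unity: the 2N-th root of unity of largest real part other than 1 is
   primitive, and N.-root (-1) is that root or its conjugate. *)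

Section UnitCircle.
Variable C : numClosedFieldType.
Implicit Types u v w x y : C.

Lemma unity_root_norm1 (M : nat) x : (0 < M)%N -> x ^+ M = 1 -> `|x| = 1.
Proof.
by move=> M_gt0 xM; apply/eqP; rewrite -(pexpr_eq1 M_gt0) ?normr_ge0 // -normrX xM normr1.
Qed.

Lemma Re2_Im2_norm1 x : `|x| = 1 -> 'Re x ^+ 2 + 'Im x ^+ 2 = 1.
Proof. by move=> x1; rewrite -normC2_Re_Im x1 expr1n. Qed.

Lemma Re_bounds_norm1 x : `|x| = 1 -> -1 <= 'Re x <= 1.
Proof.
by move=> x1; have := (leif_normC_Re_Creal x).1; rewrite x1 real_ler_norml ?Creal_Re.
Qed.

Lemma Re_eq_norm1 x y : `|x| = 1 -> `|y| = 1 -> 'Re x = 'Re y -> x = y \/ x = y^*.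
Proof.
move=> x1 y1 eqRe.
have /eqP : 'Im x ^+ 2 = 'Im y ^+ 2.
  by apply: (@addrI _ ('Re y ^+ 2)); rewrite -{1}eqRe !Re2_Im2_norm1.
rewrite eqf_sqr => /orP[/eqP eqIm | /eqP eqIm].
  by left; apply/eqCP.
by right; apply/eqCP; rewrite Re_conj Im_conj.
Qed.

Lemma Re_lt1_norm1 x : `|x| = 1 -> x != 1 -> 'Re x < 1.
Proof.
move=> x1 neq_x1; rewrite lt_neqAle (andP (Re_bounds_norm1 x1)).2 andbT.
apply: contra neq_x1 => /eqP Re_x1.
have Re1 : 'Re (1 : C) = 1 by rewrite (Creal_ReP _ (rpred1 _)).
by case: (Re_eq_norm1 x1 (normr1 C)); rewrite ?conjC1 ?Re_x1 ?Re1 // => ->.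
Qed.

Lemma unity_root_conjC (M : nat) x : (0 < M)%N -> x ^+ M = 1 -> x^* = x ^+ M.-1.
Proof.
move=> M_gt0 xM; have x_neq0 : x != 0.
  by apply: contra_eq_neq xM => ->; rewrite expr0n gtn_eqF // eq_sym oner_eq0.
apply: (mulIf x_neq0); rewrite -exprSr prednK // xM.
by rewrite -normCKC (unity_root_norm1 M_gt0 xM) expr1n.
Qed.

Lemma prim_root_conjC (M : nat) u : M.-primitive_root u -> M.-primitive_root u^*.
Proof.
move=> prim_u; have M_gt0 := prim_order_gt0 prim_u.
rewrite (unity_root_conjC M_gt0 (prim_expr_order prim_u)).
by rewrite prim_root_exp_coprime // -{2}(prednK M_gt0) coprimenS.
Qed.

Lemma Re_lt_Re_rotate u v : `|u| = 1 -> `|v| = 1 -> 'Re v < 'Re u -> 'Re u < 1 ->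
  'Re v < 'Re v * 'Re u + `|'Im v| * `|'Im u|.
Proof.
move=> u1 v1 Re_vu Re_u1.
have [a_real c_real] := (Creal_Re v, Creal_Re u).
set a := 'Re v in a_real Re_vu *; set c := 'Re u in c_real Re_vu Re_u1 *.
set b : C := `|'Im v|; set d : C := `|'Im u|.
have ab : a ^+ 2 + b ^+ 2 = 1 by rewrite real_normK ?Creal_Im // Re2_Im2_norm1.
have cd : c ^+ 2 + d ^+ 2 = 1 by rewrite real_normK ?Creal_Im // Re2_Im2_norm1.
have c1_gt0 : 0 < 1 - c by rewrite subr_gt0.
rewrite -subr_gt0 (_ : _ - a = b * d - a * (1 - c)); last by ring.
rewrite subr_gt0; case: (real_ltP a_real (real0 C)) => [a_lt0 | a_ge0].
  apply: (lt_le_trans (y := 0)); first by rewrite nmulr_rlt0.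
  by rewrite mulr_ge0 ?normr_ge0.
have c_gt0 : 0 < c by apply: le_lt_trans Re_vu.
have d_le_b : d <= b.
  rewrite -(ler_pXn2r (_ : (0 < 2)%N)) ?nnegrE ?normr_ge0 //.
  rewrite -(lerD2l (a ^+ 2)) ab -cd lerD2r.
  by rewrite (lterXn2r C).1 ?nnegrE // ltW.
apply: (lt_le_trans (y := c * (1 - c))); first by rewrite ltr_pM2r.
apply: (le_trans (y := d * d)).
  rewrite -expr2 -[d ^+ 2](addKr (c ^+ 2)) cd (_ : - _ + 1 = (1 + c) * (1 - c)); last by ring.
  by rewrite ler_wpM2r ?(ltW c1_gt0) // lerDr.
by rewrite ler_wpM2r ?normr_ge0.
Qed.

Lemma exists_rotate_Re_gt u v : `|u| = 1 -> `|v| = 1 -> 'Re v < 'Re u -> 'Re u < 1 ->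
  exists2 w, w = v * u \/ w = v * u^* & 'Re v < 'Re w.
Proof.
move=> u1 v1 Re_vu Re_u1; have := Re_lt_Re_rotate u1 v1 Re_vu Re_u1.
rewrite -normrM; case: (real_ge0P (rpredM (Creal_Im v) (Creal_Im u))) => [Im_ge0 | Im_lt0].
  move=> lt_vw; exists (v * u^* ); first by right.
  by rewrite ReM Re_conj Im_conj mulrN opprK.
move=> lt_vw; exists (v * u); first by left.
by rewrite ReM.
Qed.

Lemma Re_max_seq (s : seq C) x : x \in s ->
  exists2 v, v \in s & forall w, w \in s -> 'Re w <= 'Re v.
Proof.
elim: s x => // a s IH _ _.
have [-> | [v vs v_max]] : s = [::] \/ exists2 v, v \in s & forall w, w \in s -> 'Re w <= 'Re v.
- by case: s IH => [|b s] IH; [left | right; apply: (IH b); exact: mem_head].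
- by exists a; rewrite ?mem_head // => w; rewrite inE => /eqP ->.
case/orP: (real_leVge (Creal_Re v) (Creal_Re a)) => le_va.
  exists a; first exact: mem_head.
  by move=> w; rewrite inE => /orP[/eqP -> // | /v_max/le_trans]; apply.
by exists v; rewrite ?inE ?vs ?orbT // => w; rewrite inE => /orP[/eqP -> // | /v_max].
Qed.

Lemma unity_roots_seq (M : nat) : (0 < M)%N ->
  exists rs : seq C, forall x, (x \in rs) = (x ^+ M == 1).
Proof.
move=> M_gt0; have [rs Dp] := closed_field_poly_normal ('X^M - 1 : {poly C}).
rewrite (monicP _) ?monicXnsubC // scale1r in Dp.
by exists rs => x; rewrite -root_prod_XsubC -Dp rootE !hornerE subr_eq0.
Qed.

Lemma prim_root_exists (M : nat) : (0 < M)%N -> exists u : C, M.-primitive_root u.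
Proof.
move=> M_gt0; have [rs Dp] := closed_field_poly_normal ('X^M - 1 : {poly C}).
rewrite (monicP _) ?monicXnsubC // scale1r in Dp.
have rsM : all M.-unity_root rs by apply/allP => x; rewrite -root_prod_XsubC -Dp.
have size_rs : (M < (size rs).+1)%N by rewrite -(size_prod_XsubC rs id) -Dp size_XnsubC.
have [|u] := hasP (has_prim_root M_gt0 rsM _ size_rs); last by exists u.
by rewrite -separable_prod_XsubC -Dp separable_Xn_sub_1 // pnatr_eq0 -lt0n.
Qed.

Section MaxRealPart.
Variables (M : nat) (u : C).
Hypotheses (M_gt0 : (0 < M)%N) (uM : u ^+ M = 1) (u_neq1 : u != 1).
Hypothesis u_Re_max : forall w, w ^+ M = 1 -> w != 1 -> 'Re w <= 'Re u.

(* If some M-th root of unity is not a power of u, take such a v of largest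
   real part; rotating v by u or u^-1 gives another one with larger real part. *)
Lemma Re_max_unity_root_generates x : x ^+ M = 1 -> exists j, x = u ^+ j.
Proof.
pose is_pow y := [exists j : 'I_M, y == u ^+ j].
have is_powX j : is_pow (u ^+ j).
  by apply/existsP; exists (Ordinal (ltn_pmod j M_gt0)); rewrite /= expr_mod.
suff all_pow y : y ^+ M = 1 -> is_pow y by move/all_pow/existsP => [j /eqP ->]; exists j.
move=> yM; apply: contraT => npow_y; have [rs rsE] := unity_roots_seq M_gt0.
have [|v] := @Re_max_seq [seq y <- rs | ~~ is_pow y] y.
  by rewrite mem_filter rsE yM eqxx andbT.
rewrite mem_filter rsE => /andP[npow_v /eqP vM] v_max.
have [u1 v1] := (unity_root_norm1 M_gt0 uM, unity_root_norm1 M_gt0 vM).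
have Re_vu : 'Re v < 'Re u.
  rewrite lt_neqAle u_Re_max //; last by apply: contra npow_v => /eqP ->; rewrite -(expr0 u).
  rewrite andbT; apply: contra npow_v => /eqP/(Re_eq_norm1 v1 u1)[-> | ->].
    by rewrite -(expr1 u).
  by rewrite (unity_root_conjC M_gt0 uM).
have [w Dw Re_vw] := exists_rotate_Re_gt u1 v1 Re_vu (Re_lt1_norm1 u1 u_neq1).
have [e Dv] : exists e, v = w * u ^+ e.
  case: Dw => ->; [exists M.-1 | exists 1%N].
    by rewrite -mulrA -exprS prednK // uM mulr1.
  by rewrite -mulrA -normCKC u1 expr1n mulr1.
have wM : w ^+ M = 1.
  by case: Dw => ->; rewrite exprMn vM mul1r // -rmorphXn uM rmorph1.
have /existsP[j /eqP Dwj] : is_pow w.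
  apply: contraT => npow_w; have := v_max w; rewrite mem_filter rsE wM eqxx andbT.
  by move/(_ npow_w)/(lt_le_trans Re_vw); rewrite ltxx.
by move: npow_v; rewrite Dv Dwj -exprD is_powX.
Qed.

Lemma prim_root_Re_max : M.-primitive_root u.
Proof.
have [g prim_g] := prim_root_exists M_gt0.
have [j Dg] := Re_max_unity_root_generates (prim_expr_order prim_g).
have [k prim_u k_dvd_M] := prim_order_exists M_gt0 uM.
have M_dvd_k : (M %| k)%N.
  by rewrite (prim_order_dvd prim_g) Dg exprAC (prim_expr_order prim_u) expr1n.
by have -> : M = k by apply/eqP; rewrite eqn_dvd M_dvd_k k_dvd_M.
Qed.

End MaxRealPart.

(* [rootC_Re_max]: N.-root (-1) has the largest real part among the N-th roots
   of -1 in the closed upper half-plane. *)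
Lemma prim_root_rootCN1 (N : nat) : (1 < N)%N -> (2 * N).-primitive_root (N.-root (-1 : C)).
Proof.
move=> N_gt1; set y := N.-root (-1); set M := (2 * N)%N.
have [N_gt0 M_gt0] : (0 < N)%N /\ (0 < M)%N by split; lia.
have yN : y ^+ N = -1 by rewrite rootCK.
have N1M : (-1) ^+ M = 1 :> C by rewrite /M exprM sqrrN !expr1n.
have yM : y ^+ M = 1 by rewrite /M mulnC exprM yN sqrrN expr1n.
have N1_neq1 : (-1 : C) != 1 by rewrite -subr_eq0 -opprD oppr_eq0 (_ : 1 + 1 = 2%:R) // pnatr_eq0.
have y_neq1 : y != 1 by apply: contra_eq_neq yN => ->; rewrite expr1n eq_sym.
have [rs rsE] := unity_roots_seq M_gt0.
have [|u] := @Re_max_seq [seq x <- rs | x != 1] (-1).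
  by rewrite mem_filter N1_neq1 rsE N1M eqxx.
rewrite mem_filter rsE => /andP[u_neq1 /eqP uM] u_max.
have prim_u : M.-primitive_root u.
  by apply: prim_root_Re_max => // w wM w_neq1; apply: u_max; rewrite mem_filter w_neq1 rsE wM eqxx.
have uN : u ^+ N = -1.
  have /eqP : (u ^+ N) ^+ 2 = 1 by rewrite -exprM mulnC uM.
  rewrite sqrf_eq1 => /orP[|/eqP //]; rewrite -(prim_order_dvd prim_u) => /dvdn_leq.
  by rewrite /M; lia.
have Re_uy : 'Re u <= 'Re y.
  case: (real_ge0P (Creal_Im u)) => [Im_ge0 | Im_lt0]; first exact: rootC_Re_max.
  rewrite -Re_conj; apply: rootC_Re_max; first by [].
    by rewrite -rmorphXn uN rmorphN1.
  by rewrite Im_conj oppr_ge0 ltW.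
have Re_yu : 'Re y <= 'Re u by apply: u_max; rewrite mem_filter y_neq1 rsE yM eqxx.
have [y1 u1] := (unity_root_norm1 M_gt0 yM, unity_root_norm1 M_gt0 uM).
have eq_Re : 'Re y = 'Re u by apply/le_anti; rewrite Re_yu Re_uy.
by case: (Re_eq_norm1 y1 u1 eq_Re) => ->; last exact: prim_root_conjC.
Qed.

Lemma zeta_prim (m : nat) : (0 < m)%N -> (2 * m + 1).-primitive_root (zeta C m).
Proof.
move=> m_gt0; have N_gt1 : (1 < 2 * m + 1)%N by lia.
by have := exp_prim_root (prim_root_rootCN1 N_gt1) 2; rewrite gcdnMr mulKn.
Qed.

End UnitCircle.

Lemma bin2D (a b : nat) : 'C(a + b, 2) = ('C(a, 2) + 'C(b, 2) + a * b)%N.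
Proof.
elim: b => [|b IH]; first by rewrite addn0 bin0n muln0 !addn0.
by rewrite addnS !binS IH !bin1; lia.
Qed.

Lemma sign_bin2_double (R : pzRingType) (k : nat) : (-1) ^+ 'C(2 * k, 2) = (-1) ^+ k :> R.
Proof.
suff odd_bin : odd 'C(2 * k, 2) = odd k by rewrite -signr_odd odd_bin signr_odd.
rewrite bin2 -mulnA mul2n doubleK oddM; case: k => // k.
by rewrite [X in _ && X](_ : _ = true) ?andbT // mulnS /= oddD oddM.
Qed.

Section SeqProducts.
Variable R : comNzRingType.

Lemma prodr_const_seq (I : Type) (s : seq I) (c : R) : \prod_(i <- s) c = c ^+ size s.
Proof. by elim: s => [|a s IH]; rewrite ?big_nil ?big_cons ?IH ?exprS. Qed.

Lemma prodrN_seq (I : Type) (s : seq I) (F : I -> R) :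
  \prod_(i <- s) - F i = (-1) ^+ size s * \prod_(i <- s) F i.
Proof.
rewrite -prodr_const_seq -big_split /=.
by apply: eq_bigr => i _; rewrite mulN1r.
Qed.

Lemma horner_prod_XsubC (s : seq R) (c : R) :
  (\prod_(r <- s) ('X - r%:P)).[c] = \prod_(r <- s) (c - r).
Proof. by rewrite horner_prod; apply: eq_bigr => r _; rewrite hornerXsubC. Qed.

Lemma prod_subr_horner_XsubC (s : seq R) (c : R) :
  \prod_(r <- s) (r - c) = (-1) ^+ size s * (\prod_(r <- s) ('X - r%:P)).[c].
Proof. by rewrite horner_prod_XsubC -prodrN_seq; apply: eq_bigr => r _; rewrite opprB. Qed.

Lemma deriv_prod_XsubC_nth (s : seq R) (i : nat) : (i < size s)%N ->
  (\prod_(r <- s) ('X - r%:P))^`().[s`_i] = \prod_(j < size s | j != i :> nat) (s`_i - s`_j).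
Proof.
elim: s i => [|a s IH] i //= lt_i_s.
rewrite big_cons derivM derivXsubC mul1r hornerD hornerM hornerXsubC.
rewrite [RHS]big_mkcond big_ord_recl /bump /=.
case: i lt_i_s => [|i] lt_i_s /=.
  rewrite subrr mul0r addr0 mul1r horner_prod_XsubC (big_nth 0) big_mkord.
  by apply: eq_bigr => j _; rewrite add0n.
rewrite horner_prod_XsubC (big_rem s`_i) ?mem_nth //= subrr mul0r add0r IH // big_mkcond.
by congr (_ * _); apply: eq_bigr => j _; rewrite add1n add0n eqSS.
Qed.

Lemma prodr_const_ord_gt (c : R) (i d : nat) : \prod_(j < d | (i < j)%N) c = c ^+ (d - i.+1).
Proof.
elim: d => [|d IH]; first by rewrite big_ord0.
rewrite big_mkcond big_ord_recr /= -big_mkcond /= IH.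
case: (ltnP i d) => [lt_id | le_di]; first by rewrite subSn // exprS mulrC.
have [-> ->] : (d - i.+1 = 0 /\ d.+1 - i.+1 = 0)%N by lia.
by rewrite mulr1.
Qed.

Lemma prod_sqr_sub_ltn (d : nat) (x : nat -> R) :
  \prod_(i < d) \prod_(j < d | (i < j)%N) (x i - x j) ^+ 2 =
  (-1) ^+ 'C(d, 2) * \prod_(i < d) \prod_(j < d | j != i :> nat) (x i - x j).
Proof.
have sqr_sub i j : (x i - x j) ^+ 2 = -1 * ((x i - x j) * (x j - x i)).
  by rewrite mulN1r -mulrN opprB expr2.
under eq_bigr => i _ do under eq_bigr => j _ do rewrite sqr_sub.
under eq_bigr => i _ do rewrite big_split /= big_split /=.
rewrite big_split /= big_split /=.
under eq_bigr => i _ do rewrite prodr_const_ord_gt.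
rewrite prodrXr; have -> : (\sum_(i < d) (d - i.+1) = 'C(d, 2))%N.
  rewrite -bin2_sum big_mkord (reindex_inj rev_ord_inj) /=.
  by apply: eq_bigr => i _; have := ltn_ord i; lia.
congr (_ * _).
under [RHS]eq_bigr => i _ do rewrite (bigID (fun j : 'I_d => (i < j)%N)) /=.
rewrite big_split /=; congr (_ * _).
  apply: eq_bigr => i _; apply: eq_bigl => j.
  by case: (ltngtP i j) => //= /gtn_eqF ->.
rewrite (exchange_big_dep xpredT) //=.
apply: eq_bigr => i _; apply: eq_bigl => j.
by case: (ltngtP i j) => //= [/ltn_eqF -> | ->]; rewrite ?eqxx.
Qed.

End SeqProducts.

Section Discriminant.
Variable C : numClosedFieldType.

Lemma monic_roots_ofE (p : {poly C}) : p \is monic -> p = \prod_(r <- roots_of p) ('X - r%:P).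
Proof.
rewrite /roots_of; case: (closed_field_poly_normal p) => rs /= Dp.
by move/monicP => lc1; rewrite {1}Dp lc1 scale1r.
Qed.

Lemma disc_prod_XsubC (p : {poly C}) (rs : seq C) : p = \prod_(r <- rs) ('X - r%:P) ->
  disc p = (-1) ^+ 'C(size rs, 2) * \prod_(r <- rs) p^`().[r].
Proof.
move=> Dp; have p_monic : p \is monic by rewrite Dp monic_prod_XsubC.
have Dp' := monic_roots_ofE p_monic; set rs' := roots_of p in Dp'.
have rs'_rs : perm_eq rs' rs by apply: prod_XsubC_eq; rewrite -Dp' -Dp.
rewrite /disc -/rs' (monicP p_monic) expr1n mul1r -(perm_big _ rs'_rs) /= -(perm_size rs'_rs).
rewrite (prod_sqr_sub_ltn _ (nth 0 rs')) (big_nth 0) big_mkord; congr (_ * _).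
by apply: eq_bigr => i _; rewrite {1}Dp' deriv_prod_XsubC_nth.
Qed.

Lemma disc_mul_prod_XsubC (p q : {poly C}) (rs ss : seq C) :
  p = \prod_(r <- rs) ('X - r%:P) -> q = \prod_(s <- ss) ('X - s%:P) ->
  disc (p * q) = disc p * disc q * (\prod_(r <- rs) q.[r]) ^+ 2.
Proof.
move=> Dp Dq; have Dpq : p * q = \prod_(r <- rs ++ ss) ('X - r%:P) by rewrite big_cat -Dp -Dq.
rewrite (disc_prod_XsubC Dpq) (disc_prod_XsubC Dp) (disc_prod_XsubC Dq) size_cat big_cat /=.
have p_root r : r \in rs -> p.[r] = 0.
  by move=> rs_r; apply/rootP; rewrite Dp root_prod_XsubC.
have q_root s : s \in ss -> q.[s] = 0.
  by move=> ss_s; apply/rootP; rewrite Dq root_prod_XsubC.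
have deriv_at_rs : \prod_(r <- rs) (p * q)^`().[r] = \prod_(r <- rs) (p^`().[r] * q.[r]).
  by apply: eq_big_seq => r /p_root pr0; rewrite derivM hornerD !hornerM pr0 mul0r addr0.
have deriv_at_ss : \prod_(s <- ss) (p * q)^`().[s] = \prod_(s <- ss) (p.[s] * q^`().[s]).
  by apply: eq_big_seq => s /q_root qs0; rewrite derivM hornerD !hornerM qs0 mulr0 add0r.
have resultant_sym : \prod_(s <- ss) p.[s] = (-1) ^+ (size rs * size ss) * \prod_(r <- rs) q.[r].
  rewrite Dp Dq; under eq_bigr => s _ do rewrite horner_prod_XsubC.
  under [in RHS]eq_bigr => r _ do rewrite horner_prod_XsubC.
  rewrite exchange_big /= mulnC exprM -prodr_const_seq -big_split /=.
  by apply: eq_bigr => r _; rewrite -prodrN_seq; apply: eq_bigr => s _; rewrite opprB.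
rewrite deriv_at_rs deriv_at_ss !big_split /= resultant_sym bin2D !exprD.
set S := (-1) ^+ (size rs * size ss).
have SS : S * S = 1 by rewrite -expr2 sqrr_sign.
transitivity (S * S * ((-1) ^+ 'C(size rs, 2) * \prod_(r <- rs) p^`().[r] *
  ((-1) ^+ 'C(size ss, 2) * \prod_(s <- ss) q^`().[s]) * (\prod_(r <- rs) q.[r]) ^+ 2)).
  by ring.
by rewrite SS mul1r.
Qed.

End Discriminant.

Section Kpoly.
Variables (C : numClosedFieldType) (n : nat) (q : C).
Hypothesis n_gt0 : (0 < n)%N.
Local Notation K := (Kpoly n q).

Lemma horner_Kpoly c : K.[c] = (1 + c) ^+ (2 * n) + q * c ^+ n.
Proof. by rewrite !hornerE. Qed.

Lemma horner_deriv_Kpoly c :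
  K^`().[c] = (2 * n)%:R * (1 + c) ^+ (2 * n).-1 + q * n%:R * c ^+ n.-1.
Proof.
rewrite derivD deriv_exp derivZ derivXn derivD derivC derivX add0r mul1r.
rewrite hornerD !hornerMn !hornerE hornerMn hornerXn.
by rewrite -[_ *+ (2 * n)]mulr_natl -[_ *+ n]mulr_natl mulrA.
Qed.

Let Kpoly_XsubC : K = ('X - (-1)%:P) ^+ (2 * n) + q *: 'X^n.
Proof. by rewrite /Kpoly polyCN opprK polyC1 [1 + _]addrC. Qed.

Let size_Kpoly_lt : (size (q *: 'X^n) < size (('X - (-1)%:P : {poly C}) ^+ (2 * n)))%N.
Proof. by rewrite size_exp_XsubC (leq_ltn_trans (size_scale_leq _ _)) // size_polyXn; lia. Qed.

Lemma size_Kpoly : size K = (2 * n).+1.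
Proof. by rewrite Kpoly_XsubC size_polyDl // size_exp_XsubC. Qed.

Lemma Kpoly_monic : K \is monic.
Proof. by rewrite Kpoly_XsubC monicE lead_coefDl // -monicE monic_exp // monicXsubC. Qed.

Lemma horner_Kpoly_unit w : w != 0 -> K.[w] = w ^+ n * (q + (w + w^-1 + 2) ^+ n).
Proof.
move=> w_neq0; have sqr_1w : (1 + w) ^+ 2 = w * (w + w^-1 + 2) by field.
by rewrite horner_Kpoly exprM sqr_1w exprMn; ring.
Qed.

Lemma deriv_Kpoly_root r : root K r -> K^`().[r] * (r * (1 + r)) = n%:R * q * r ^+ n * (1 - r).
Proof.
rewrite rootE horner_Kpoly horner_deriv_Kpoly => /eqP Kr0.
have e2n : (1 + r) ^+ (2 * n) = (1 + r) ^+ (2 * n).-1 * (1 + r) by rewrite -exprSr prednK //; lia.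
have en : r ^+ n = r ^+ n.-1 * r by rewrite -exprSr prednK.
transitivity (n%:R * q * r ^+ n * (1 - r) + (2 * n)%:R * r * ((1 + r) ^+ (2 * n) + q * r ^+ n)).
  by rewrite e2n en natrM; ring.
by rewrite Kr0 mulr0 addr0.
Qed.

Lemma size_roots_of_Kpoly : size (roots_of K) = (2 * n)%N.
Proof.
by apply: succn_inj; rewrite -size_Kpoly {2}(monic_roots_ofE Kpoly_monic) size_prod_XsubC.
Qed.

(* Multiply [deriv_Kpoly_root] over the roots r and read the products of r,
   1 + r and 1 - r off K(0), K(-1) and K(1). *)
Lemma prod_deriv_Kpoly_roots : \prod_(r <- roots_of K) K^`().[r] =
  (-1) ^+ n * n%:R ^+ (2 * n) * q ^+ (2 * n - 1) * (q + 2 ^+ (2 * n)).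
Proof.
set rs := roots_of K; have DK := monic_roots_ofE Kpoly_monic; rewrite -/rs in DK.
have K_at c : \prod_(r <- rs) (r - c) = K.[c].
  by rewrite prod_subr_horner_XsubC -DK size_roots_of_Kpoly exprM sqrrN !expr1n mul1r.
have [q0 | q_neq0] := eqVneq q 0.
  have rs_N1 : -1 \in rs.
    rewrite -root_prod_XsubC -DK rootE horner_Kpoly q0 addrN expr0n muln_eq0 /=.
    by rewrite mul0r addr0 gtn_eqF.
  rewrite [in q ^+ _]q0 expr0n (_ : 2 * n - 1 == 0 = false)%N /=; last by lia.
  rewrite mulr0 mul0r; apply/eqP; rewrite prodf_seq_eq0; apply/hasP; exists (-1) => //=.
  rewrite horner_deriv_Kpoly q0 addrN expr0n (_ : _.-1 == 0 = false)%N; last by lia.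
  by rewrite mulr0 !mul0r addr0.
have prod_id : \prod_(r <- rs) (K^`().[r] * (r * (1 + r))) =
               \prod_(r <- rs) (n%:R * q * r ^+ n * (1 - r)).
  by apply: eq_big_seq => r rs_r; rewrite deriv_Kpoly_root // DK root_prod_XsubC.
rewrite !big_split /= !prodr_const_seq prodrXl size_roots_of_Kpoly in prod_id.
have prod_rs : \prod_(r <- rs) r = 1.
  rewrite -(eq_bigr _ (fun r _ => subr0 r)) K_at horner_Kpoly.
  by rewrite addr0 expr1n expr0n gtn_eqF // mulr0 addr0.
have prod_1rs : \prod_(r <- rs) (1 + r) = q * (-1) ^+ n.
  rewrite (eq_bigr (fun r => r - (-1))) => [|r _]; last by rewrite opprK addrC.
  by rewrite K_at horner_Kpoly addrN expr0n muln_eq0 /= gtn_eqF // add0r.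
have prod_1_rs : \prod_(r <- rs) (1 - r) = 2 ^+ (2 * n) + q.
  by rewrite -horner_prod_XsubC -DK horner_Kpoly expr1n mulr1.
rewrite prod_rs prod_1rs prod_1_rs expr1n mulr1 mul1r in prod_id.
apply: (mulIf (_ : q * (-1) ^+ n != 0)); first by rewrite mulf_neq0 ?signr_eq0.
have q2n : q ^+ (2 * n) = q ^+ (2 * n - 1) * q by rewrite -exprSr; congr (_ ^+ _); lia.
rewrite prod_id q2n.
transitivity ((-1) ^+ n * (-1) ^+ n *
  (n%:R ^+ (2 * n) * (q ^+ (2 * n - 1) * q) * (2 ^+ (2 * n) + q))).
  by rewrite -expr2 sqrr_sign mul1r.
ring.
Qed.

Lemma disc_Kpoly : disc K = n%:R ^+ (2 * n) * q ^+ (2 * n - 1) * (q + 2 ^+ (2 * n)).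
Proof.
rewrite (disc_prod_XsubC (monic_roots_ofE Kpoly_monic)) size_roots_of_Kpoly.
by rewrite sign_bin2_double prod_deriv_Kpoly_roots !mulrA -expr2 sqrr_sign mul1r.
Qed.

End Kpoly.

Section Fpoly.
Variables (C : numClosedFieldType) (m : nat).
Hypothesis m_gt0 : (0 < m)%N.
Local Notation N := (2 * m + 1)%N.
Local Notation f := (fpoly C m).

Definition fpoly_roots : seq C := [seq zeta C m ^+ i | i <- index_iota 1 N].

Lemma size_fpoly_roots : size fpoly_roots = (2 * m)%N.
Proof. by rewrite size_map size_iota; lia. Qed.

Lemma XsubC_mul_fpoly_roots : ('X - 1) * \prod_(r <- fpoly_roots) ('X - r%:P) = 'X^N - 1.
Proof.
by rewrite big_map -(factor_Xn_sub_1 (zeta_prim C m_gt0)) (big_ltn (_ : 0 < N)%N) ?addn1.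
Qed.

Lemma fpoly_prod : f = \prod_(r <- fpoly_roots) ('X - r%:P).
Proof. by rewrite /fpoly -XsubC_mul_fpoly_roots mulKp // -polyC1 polyXsubC_eq0. Qed.

Lemma XsubC_mul_fpoly : ('X - 1) * f = 'X^N - 1.
Proof. by rewrite fpoly_prod XsubC_mul_fpoly_roots. Qed.

Lemma horner_deriv_fpoly c : f.[c] + (c - 1) * f^`().[c] = N%:R * c ^+ N.-1.
Proof.
have := congr1 (fun p => p^`().[c]) XsubC_mul_fpoly; rewrite /=.
rewrite derivM !derivB derivX derivXn -polyC1 derivC subr0 mul1r.
by rewrite !hornerE hornerMn hornerXn subr0 -mulr_natl.
Qed.

Lemma prod_sub_fpoly_roots c : \prod_(r <- fpoly_roots) (r - c) = f.[c].
Proof.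
by rewrite prod_subr_horner_XsubC -fpoly_prod size_fpoly_roots exprM sqrrN !expr1n mul1r.
Qed.

Lemma prod_fpoly_roots : \prod_(r <- fpoly_roots) r = 1.
Proof.
rewrite -(eq_bigr _ (fun r _ => subr0 r)) prod_sub_fpoly_roots.
have := congr1 (fun p => p.[0]) XsubC_mul_fpoly; rewrite /= !hornerE expr0n addnS /=.
by rewrite sub0r mulN1r => /oppr_inj.
Qed.

Lemma disc_fpoly : disc f = (-1) ^+ m * N%:R ^+ (2 * m - 1).
Proof.
set rs := fpoly_roots; have Df : f = \prod_(r <- rs) ('X - r%:P) := fpoly_prod.
have prod_id : \prod_(w <- rs) ((w - 1) * f^`().[w]) = \prod_(w <- rs) (N%:R * w ^+ N.-1).
  apply: eq_big_seq => w rs_w; have fw0 : f.[w] = 0 by apply/rootP; rewrite Df root_prod_XsubC.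
  by rewrite -horner_deriv_fpoly fw0 add0r.
rewrite !big_split /= prodr_const_seq prodrXl size_fpoly_roots in prod_id.
have prod_rs1 : \prod_(r <- rs) (r - 1) = N%:R.
  rewrite prod_sub_fpoly_roots; have := horner_deriv_fpoly 1.
  by rewrite subrr mul0r addr0 expr1n mulr1.
rewrite prod_fpoly_roots prod_rs1 expr1n mulr1 in prod_id.
rewrite (disc_prod_XsubC Df) size_fpoly_roots sign_bin2_double; congr (_ * _).
apply: (mulfI (_ : N%:R != 0 :> C)); first by rewrite pnatr_eq0 addn1.
by rewrite prod_id -exprS; congr (_ ^+ _); lia.
Qed.

Lemma twocos_sub k : (k <= N)%N -> twocos C m (N - k) = twocos C m k.
Proof.
move=> le_kN; have z_neq0 : zeta C m != 0 by rewrite (prim_root_eq0 (zeta_prim C m_gt0)) addn1.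
have zk_neq0 : zeta C m ^+ k != 0 by rewrite expf_neq0.
rewrite /twocos (_ : zeta C m ^+ (N - k) = (zeta C m ^+ k)^-1) ?invrK 1?addrC //.
by apply: (mulIf zk_neq0); rewrite mulVf // -exprD subnK // (prim_expr_order (zeta_prim C m_gt0)).
Qed.

(* The factors for k and 2m + 1 - k coincide, whence the square. *)
Lemma prod_Kpoly_fpoly_roots (n : nat) (q : C) :
  \prod_(w <- fpoly_roots) (Kpoly n q).[w] = Hpoly m n q ^+ 2.
Proof.
have z_neq0 : zeta C m != 0 by rewrite (prim_root_eq0 (zeta_prim C m_gt0)) addn1.
rewrite big_map; under eq_bigr => i _ do rewrite (horner_Kpoly_unit n q (expf_neq0 i z_neq0)).
rewrite big_split /= prodrXl -(big_map _ predT id) prod_fpoly_roots expr1n mul1r.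
set g := fun i => q + (twocos C m i + 2) ^+ n.
have half_sym : \prod_(m.+1 <= i < N) g i = Hpoly m n q.
  rewrite big_nat_rev /=.
  transitivity (\prod_(m.+1 <= i < N) g (i - m)%N).
    apply: eq_big_nat => i /andP [h1 h2].
    by rewrite (_ : (m.+1 + N - i.+1 = N - (i - m))%N) ?/g ?twocos_sub //; lia.
  rewrite -[m.+1]/(1 + m)%N big_addn (_ : (N - m = m.+1)%N); last by lia.
  by apply: eq_bigr => i _; rewrite addnK.
by rewrite -/(index_iota 1 N) (big_cat_nat _ (n := m.+1)) //= ?half_sym ?expr2 //; lia.
Qed.

End Fpoly.

Theorem proposition2p3 (C : numClosedFieldType) (n m : nat) (q : C) :
  (1 <= n)%N -> (1 <= m)%N ->
  disc (Kpoly n q * fpoly C m) =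
    Cconst C m n * q ^+ (2 * n - 1) * (q + 2 ^+ (2 * n)) *
    \prod_(1 <= k < m.+1) (q + (twocos C m k + 2) ^+ n) ^+ 4
  /\
  disc (Kpoly n q * fpoly C m) =
    Cconst C m n * q ^+ (2 * n - 1) * (q + 2 ^+ (2 * n)) * Hpoly m n q ^+ 4.
Proof.
move=> n_gt0 m_gt0.
have disc_Kf : disc (Kpoly n q * fpoly C m) =
    Cconst C m n * q ^+ (2 * n - 1) * (q + 2 ^+ (2 * n)) * Hpoly m n q ^+ 4.
  rewrite mulrC (disc_mul_prod_XsubC (fpoly_prod C m_gt0) (monic_roots_ofE (Kpoly_monic q n_gt0))).
  rewrite disc_fpoly // disc_Kpoly // prod_Kpoly_fpoly_roots // -exprM /Cconst; ring.
by split; rewrite disc_Kf // prodrXl.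
Qed.
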